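(* Let $(X,d,A)$ be a metric pair with $(X,d)$ $\sigma$-compact, and let $p\in[1,\infty]$. Then $(D(X,A),W_p)$ is $\sigma$-compact.
   Context: A metric on $X$ is a map $d:X\times X\to[0,\infty]$ with $d(x,x)=0$, symmetry and the triangle inequality (infinite distances allowed, $d(x,y)=0$ need not imply $x=y$); a metric pair $(X,d,A)$ is such a space with a closed subset $A$. $D(X,A)$ is the set of finite formal sums of points of $X\setminus A$ (repetitions allowed). A matching of $\hat\alpha=\sum_{i\in I}x_i$, $\hat\beta=\sum_{j\in J}y_j$ is a formal sum $\sum_{k\in K}(x_k,y_{\varphi(k)})+\sum_{i\in I\setminus K}(x_i,z_i)+\sum_{j\in J\setminus\varphi(K)}(w_j,y_j)$ with $K\subset I$, $\varphi$ injective, $z_i,w_j\in A$; its $p$-cost is the $\ell^p$ norm (sup norm if $p=\infty$) of the distances of paired points; $W_p$ is the infimum of $p$-costs. A space is $\sigma$-compact if it is a countable union of compact subspaces. *)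

From Stdlib Require List.
From HB Require Import structures.
From mathcomp Require Import all_boot all_order all_algebra.
From mathcomp Require Import all_classical all_reals all_analysis.
Set Implicit Arguments. Unset Strict Implicit. Unset Printing Implicit Defensive.
Import Order.TTheory GRing.Theory Num.Theory.
Local Open Scope classical_set_scope.
Local Open Scope ring_scope.

Section Defs.
Variable R : realType.

Definition is_metric (T : Type) (d : T -> T -> \bar R) : Prop :=
  [/\ forall x y, (0 <= d x y)%E,
      forall x, d x x = 0%E,
      forall x y, d x y = d y x &
      forall x y z, (d x z <= d x y + d y z)%E].

Definition dopen (T : Type) (d : T -> T -> \bar R) (U : set T) : Prop :=
  forall x, U x -> exists r : R, 0 < r /\ forall y, (d x y < r%:E)%E -> U y.

Definition dclosed (T : Type) (d : T -> T -> \bar R) (A : set T) : Prop :=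
  dopen d (~` A).

Definition dcompact (T : Type) (d : T -> T -> \bar R) (K : set T) : Prop :=
  forall (I : Type) (U : I -> set T),
    (forall i, dopen d (U i)) ->
    (forall x, K x -> exists i, U i x) ->
    exists s : seq I, forall x, K x -> exists i, List.In i s /\ U i x.

Definition sigma_compact (T : Type) (d : T -> T -> \bar R) : Prop :=
  exists K : nat -> set T, (forall n, dcompact d (K n)) /\ (forall x, exists n, K n x).

(* a formal sum x_0 + ... + x_{n-1} of points of X \ A *)
Record fsum (X : Type) (A : set X) := FSum {
  fs_n : nat;
  fs_pt : 'I_fs_n -> X;
  fs_off : forall i, ~ A (fs_pt i) }.

(* a matching of sum_i x_i (i < n) and sum_j y_j (j < m):
   phi i = Some j  : x_i is paired with y_phi(i)  (i in K, phi injective on K)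
   phi i = None    : x_i is paired with z_i in A
   j not in phi(K) : w_j in A is paired with y_j *)
Definition unmatched n m (phi : 'I_n -> option 'I_m) (j : 'I_m) : bool :=
  [forall i, phi i != Some j].

Record matching (X : Type) (A : set X) n m := Matching {
  m_phi : 'I_n -> option 'I_m;
  m_inj : forall i i' j, m_phi i = Some j -> m_phi i' = Some j -> i = i';
  m_z : 'I_n -> X;
  m_zA : forall i, m_phi i = None -> A (m_z i);
  m_w : 'I_m -> X;
  m_wA : forall j, unmatched m_phi j -> A (m_w j) }.

Definition match_dists (X : Type) (A : set X) (d : X -> X -> \bar R)
  n m (x : 'I_n -> X) (y : 'I_m -> X) (M : matching A n m) : seq (\bar R) :=
  [seq (match m_phi M i with Some j => d (x i) (y j) | None => d (x i) (m_z M i) end)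
    | i <- enum 'I_n]
  ++ [seq d (m_w M j) (y j) | j <- enum 'I_m & unmatched (m_phi M) j].

Definition lp_norm (p : \bar R) (c : seq (\bar R)) : \bar R :=
  match p with
  | +oo%E => \big[Order.max/0%E]_(t <- c) t
  | _ => poweR (\sum_(t <- c) poweR t (fine p))%E (fine p)^-1
  end.

Definition pcost (X : Type) (A : set X) (d : X -> X -> \bar R) (p : \bar R)
  (a b : fsum A) (M : matching A (fs_n a) (fs_n b)) : \bar R :=
  lp_norm p (match_dists d (@fs_pt _ _ a) (@fs_pt _ _ b) M).

Definition Wp (X : Type) (A : set X) (d : X -> X -> \bar R) (p : \bar R)
  (a b : fsum A) : \bar R :=
  ereal_inf [set pcost d p M | M in [set: matching A (fs_n a) (fs_n b)]].

End Defs.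

Arguments Wp {R X} A d p a b.
Arguments fsum {X} A.

(* Exhaust X minus A by the compact sets
     P(N, m) = (K_0 u ... u K_N) n {x | d(x, z) >= 1/(m+1) for all z in A},
   which avoid A and, A being closed, cover every point off A.  The formal
   sums of k points of P(N, m) are the image of the k-th power of P(N, m)
   under a map that is continuous for W_p, since the diagonal matching gives
   W_p(x_1 + ... + x_k, y_1 + ... + y_k) <= (k + 1) max_i d(x_i, y_i); the
   power is compact by the tube lemma.  These countably many compact sets,
   indexed by (k, N, m), cover D(X, A). *)

From Stdlib Require List.
From HB Require Import structures.
From mathcomp Require Import all_boot all_order all_algebra.
From mathcomp Require Import all_classical all_reals all_analysis.
Import Order.TTheory GRing.Theory Num.Theory.
Local Open Scope classical_set_scope.
Local Open Scope ring_scope.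
Set Implicit Arguments. Unset Strict Implicit. Unset Printing Implicit Defensive.

Section Pseudometric.
Context {R : realType}.

Lemma ball_open (T : Type) (d : T -> T -> \bar R) a b (r : R) :
  is_metric d -> (d a b < r%:E)%E ->
  exists2 e : R, 0 < e & forall c, (d b c < e%:E)%E -> (d a c < r%:E)%E.
Proof.
case=> d0 _ _ dtri dab.
have [t dabE] : exists t : R, d a b = t%:E.
  by move: dab (d0 a b); case: (d a b) => // t; exists t.
exists (r - t); first by rewrite subr_gt0 -lte_fin -dabE.
move=> c dbc; apply: (le_lt_trans (dtri a b c)).
by rewrite dabE addeC -[r](addrNK t) EFinD lteD2rE.
Qed.

Definition dprod (T1 T2 : Type) (d1 : T1 -> T1 -> \bar R) (d2 : T2 -> T2 -> \bar R)
    (p q : T1 * T2) : \bar R :=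
  maxe (d1 p.1 q.1) (d2 p.2 q.2).

Lemma dprod_lt (T1 T2 : Type) (d1 : T1 -> T1 -> \bar R) (d2 : T2 -> T2 -> \bar R) p q r :
  (dprod d1 d2 p q < r)%E = (d1 p.1 q.1 < r)%E && (d2 p.2 q.2 < r)%E.
Proof. exact: gt_max. Qed.

Lemma dprod_metric (T1 T2 : Type) (d1 : T1 -> T1 -> \bar R) (d2 : T2 -> T2 -> \bar R) :
  is_metric d1 -> is_metric d2 -> is_metric (dprod d1 d2).
Proof.
case=> d10 d1xx d1C d1tri [d20 d2xx d2C d2tri]; split=> [p q|p|p q|p q s].
- by rewrite le_max d10.
- by rewrite /dprod d1xx d2xx maxxx.
- by rewrite /dprod d1C d2C.
rewrite /dprod ge_max; apply/andP; split.
- by apply: (le_trans (d1tri _ q.1 _)); apply: leeD; rewrite le_max lexx.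
- by apply: (le_trans (d2tri _ q.2 _)); apply: leeD; rewrite le_max lexx orbT.
Qed.

Lemma comp_metric (T U : Type) (d : U -> U -> \bar R) (f : T -> U) :
  is_metric d -> is_metric (fun x y => d (f x) (f y)).
Proof.
by case=> d0 dxx dC dtri; split=> *; [exact: d0|exact: dxx|exact: dC|exact: dtri].
Qed.

End Pseudometric.

Section Compactness.
Context {R : realType}.

Lemma exists_pos_lower_bound (I : Type) (f : I -> R) (s : seq I) :
  exists2 r : R, 0 < r & forall t, List.In t s -> 0 < f t -> r <= f t.
Proof.
elim: s => [|t s [r r0 le_r]]; first by exists 1.
have [ft0|ft0] := ltP 0 (f t).
- exists (Num.min r (f t)); first by rewrite lt_min r0 ft0.
  by move=> u [<-|/le_r ru /ru]; rewrite ge_min ?lexx ?orbT // => ->.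
- exists r => // u [<- /(le_lt_trans ft0)|/le_r//]; by rewrite ltxx.
Qed.

Variables (T : Type) (d : T -> T -> \bar R).

Lemma dcompact_dist0 (K : set T) :
  (forall x y, K x -> K y -> (d x y <= 0)%E) -> dcompact d K.
Proof.
move=> K0 I U oU cov.
have [[x Kx]|K_empty] := pselect (exists x, K x); last first.
  by exists [::] => x Kx; case: K_empty; exists x.
have [i Uix] := cov x Kx; have [r [r0 Ur]] := oU i x Uix.
exists [:: i] => y Ky; exists i; split; first by left.
by apply: Ur; apply: le_lt_trans (K0 _ _ Kx Ky) _; rewrite lte_fin.
Qed.

Lemma dcompactU (K1 K2 : set T) :
  dcompact d K1 -> dcompact d K2 -> dcompact d (K1 `|` K2).
Proof.
move=> cK1 cK2 I U oU cov.
have [s1 h1] := cK1 I U oU (fun x K1x => cov x (or_introl K1x)).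
have [s2 h2] := cK2 I U oU (fun x K2x => cov x (or_intror K2x)).
exists (s1 ++ s2) => x [/h1|/h2] [i [si Ui]]; exists i; split=> //.
- by apply: List.in_or_app; left.
- by apply: List.in_or_app; right.
Qed.

Lemma dcompactI_closed (K F : set T) :
  dcompact d K -> dclosed d F -> dcompact d (K `&` F).
Proof.
move=> cK oF I U oU cov.
pose U' (o : option I) := if o is Some i then U i else ~` F.
have oU' o : dopen d (U' o) by case: o.
have cov' x : K x -> exists o, U' o x.
  move=> Kx; have [Fx|nFx] := pselect (F x); last by exists None.
  by have [i Ui] := cov x (conj Kx Fx); exists (Some i).
have [s hs] := cK _ U' oU' cov'.
exists (List.flat_map (fun o => if o is Some i then [:: i] else [::]) s).
move=> x [Kx Fx]; have [[i|] [si Ui]] := hs x Kx; last by [].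
by exists i; split=> //; apply/List.in_flat_map; exists (Some i); split=> //; left.
Qed.

End Compactness.

Section ImageProduct.
Context {R : realType} {T1 T2 : Type}.
Variables (d1 : T1 -> T1 -> \bar R) (d2 : T2 -> T2 -> \bar R).
Hypothesis md1 : is_metric d1.

Definition dcontinuous_on (K : set T1) (f : T1 -> T2) : Prop :=
  forall x, K x -> forall e : R, 0 < e ->
  exists2 r : R, 0 < r &
    forall y, K y -> (d1 x y < r%:E)%E -> (d2 (f x) (f y) < e%:E)%E.

Lemma dcompact_image (K : set T1) (f : T1 -> T2) :
  dcompact d1 K -> dcontinuous_on K f -> dcompact d2 (f @` K).
Proof.
move=> cK cf I U oU cov.
pose V (t : I * T1 * R) : set T1 :=
  [set y | (forall z, K z -> (d1 t.1.2 z < t.2%:E)%E -> U t.1.1 (f z)) /\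
           (d1 t.1.2 y < t.2%:E)%E].
have oV t : dopen d1 (V t).
  move=> y [Ut /(ball_open md1)[e e0 near_y]].
  by exists e; split=> // z /near_y.
have covV x : K x -> exists t, V t x.
  move=> Kx; have [i Ufx] := cov (f x) (ex_intro2 _ _ x Kx erefl).
  have [e [e0 Ue]] := oU i _ Ufx; have [r r0 fr] := cf x Kx e e0.
  exists (i, x, r); split=> [z Kz xz|]; first exact/Ue/fr.
  by case: md1 => _ -> _ _; rewrite lte_fin.
have [s hs] := cK _ V oV covV.
exists (List.map (fun t => t.1.1) s) => _ [x Kx <-].
have [t [st [Ut xt]]] := hs x Kx.
by exists t.1.1; split; [exact: List.in_map|exact: Ut].
Qed.

Hypothesis md2 : is_metric d2.

Lemma dcompact_setX (K1 : set T1) (K2 : set T2) :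
  dcompact d1 K1 -> dcompact d2 K2 -> dcompact (dprod d1 d2) (K1 `*` K2).
Proof.
move=> cK1 cK2 I U oU cov.
pose tube a r s := forall x y, (d1 a x < r%:E)%E -> K2 y ->
  exists i, List.In i s /\ U i (x, y).
have slice a : K1 a -> exists r s, 0 < r /\ tube a r s.
  move=> K1a.
  pose W (t : T2 * I * R) : set T2 :=
    [set y | [/\ 0 < t.2, (d2 t.1.1 y < t.2%:E)%E &
      forall x y', (d1 a x < t.2%:E)%E -> (d2 t.1.1 y' < t.2%:E)%E -> U t.1.2 (x, y')]].
  have oW t : dopen d2 (W t).
    move=> y [t0 /(ball_open md2)[e e0 near_y] Ut].
    by exists e; split=> // z /near_y.
  have covW b : K2 b -> exists t, W t b.
    move=> K2b; have [i Ui] := cov (a, b) (conj K1a K2b).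
    have [r [r0 Ur]] := oU i _ Ui.
    exists (b, i, r); split=> //= [|x y ax b_y].
      by case: md2 => _ -> _ _; rewrite lte_fin.
    by apply: Ur; rewrite dprod_lt ax b_y.
  have [L hL] := cK2 _ W oW covW.
  have [r r0 le_r] := exists_pos_lower_bound (fun t : T2 * I * R => t.2) L.
  exists r, (List.map (fun t => t.1.2) L); split=> // x y ax K2y.
  have [t [Lt [t0 ty Ut]]] := hL y K2y.
  exists t.1.2; split; first exact: List.in_map.
  by apply: Ut ty; apply: lt_le_trans ax _; rewrite lee_fin le_r.
pose B (t : T1 * R * seq I) : set T1 :=
  [set x | tube t.1.1 t.1.2 t.2 /\ (d1 t.1.1 x < t.1.2%:E)%E].
have oB t : dopen d1 (B t).
  move=> x [tb /(ball_open md1)[e e0 near_x]].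
  by exists e; split=> // z /near_x.
have covB a : K1 a -> exists t, B t a.
  move=> K1a; have [r [s [r0 tb]]] := slice a K1a.
  by exists (a, r, s); split=> //=; case: md1 => _ -> _ _; rewrite lte_fin.
have [L hL] := cK1 _ B oB covB.
exists (List.flat_map (fun t => t.2) L) => -[x y] [K1x K2y].
have [t [Lt [tb ax]]] := hL x K1x; have [i [si Ui]] := tb x y ax K2y.
by exists i; split=> //; apply/List.in_flat_map; exists t.
Qed.

End ImageProduct.

Section FinitePower.
Context {R : realType} {T : Type}.
Variable d : T -> T -> \bar R.

Fixpoint dpow (k : nat) : (nat -> T) -> (nat -> T) -> \bar R :=
  if k is k'.+1 then fun x y => dprod (dpow k') d (x, x k') (y, y k')
  else fun _ _ => 0%E.

Definition spow (S : set T) (k : nat) : set (nat -> T) :=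
  [set x | forall i, (i < k)%N -> S (x i)].

Lemma dpow_metric k : is_metric d -> is_metric (dpow k).
Proof.
move=> md; elim: k => [|k IH] /=; first by split=> // *; rewrite adde0.
exact: (comp_metric (fun x => (x, x k)) (dprod_metric IH md)).
Qed.

Lemma dpow_lt k x y (r : R) : 0 < r ->
  (dpow k x y < r%:E)%E <-> forall i, (i < k)%N -> (d (x i) (y i) < r%:E)%E.
Proof.
move=> r0; elim: k => [|k IH] /=; first by rewrite lte_fin r0.
rewrite dprod_lt; split=> [/andP[/IH lt_k lt_at_k] i|lt_k1].
  by rewrite ltnS leq_eqVlt => /orP[/eqP->|/lt_k].
by rewrite lt_k1 // andbT; apply/IH => i /ltnW; apply: lt_k1.
Qed.

Lemma eq_dpow k x x' y y' :
  (forall i, (i < k)%N -> x i = x' i) -> (forall i, (i < k)%N -> y i = y' i) ->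
  dpow k x y = dpow k x' y'.
Proof.
elim: k => [//|k IH] ex ey /=.
by rewrite /dprod /= ex ?ey // IH // => i /ltnW; [apply: ex|apply: ey].
Qed.

Lemma dcompact_spow (S : set T) k :
  is_metric d -> dcompact d S -> dcompact (dpow k) (spow S k).
Proof.
move=> md cS; elim: k => [|k IH]; first exact: dcompact_dist0.
pose snoc (p : (nat -> T) * T) i := if i == k then p.2 else p.1 i.
have snocE x a i : (i < k)%N -> snoc (x, a) i = x i by move=> ik; rewrite /snoc ltn_eqF.
have -> : spow S k.+1 = snoc @` (spow S k `*` S).
  apply/seteqP; split=> [x Sx|_ [[x a] [Sx Sa] <-] i].
  - exists (x, x k); first by split=> [i /ltnW|]; apply: Sx.
    by apply/funext => i; rewrite /snoc; case: eqP => [->|].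
  - rewrite ltnS leq_eqVlt => /orP[/eqP->|ik]; first by rewrite /snoc eqxx.
    by rewrite snocE //; apply: Sx.
have mdk := dpow_metric k md.
apply: (dcompact_image (dprod_metric mdk md) (dcompact_setX mdk md IH cS)).
move=> [x a] _ e e0; exists e => // -[y b] _.
rewrite /= /dprod /= (@eq_dpow k _ x _ y) => [|i /snocE //|i /snocE //].
by rewrite /snoc !eqxx.
Qed.

End FinitePower.

Section LpNorm.
Context {R : realType}.

Lemma sum_poweR_fine (c : seq (\bar R)) (q : R) :
  (forall t, t \in c -> (0 <= t)%E /\ t != +oo%E) ->
  (\sum_(t <- c) poweR t q)%E = (\sum_(t <- c) (fine t) `^ q)%:E.
Proof.
elim: c => [|t c IH] c_fin; first by rewrite !big_nil.
rewrite !big_cons IH => [|u uc]; last by apply: c_fin; rewrite in_cons uc orbT.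
have [t0 tfin] := c_fin t (mem_head _ _).
by move: t t0 tfin {c_fin} => [x||] //= _ _; rewrite EFinD.
Qed.

Lemma sum_powR_le (c : seq R) (q r : R) :
  0 <= q -> (forall t, t \in c -> 0 <= t <= r) ->
  \sum_(t <- c) t `^ q <= (size c)%:R * r `^ q.
Proof.
move=> q0; elim: c => [|t c IH] c_le; first by rewrite big_nil mul0r.
rewrite big_cons /= -addn1 natrD mulrDl mul1r addrC.
apply: lerD; first by apply: IH => u uc; apply: c_le; rewrite in_cons uc orbT.
have /andP[t0 tr] := c_le t (mem_head _ _).
by apply: ge0_ler_powR; rewrite // nnegrE // (le_trans t0).
Qed.

(* The [+1] covers the sup norm and the empty family at once. *)
Lemma lp_norm_le (p : \bar R) (c : seq (\bar R)) (r : R) :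
  (1 <= p)%E -> 0 <= r -> (forall t, t \in c -> (0 <= t)%E /\ (t <= r%:E)%E) ->
  (lp_norm p c <= ((size c).+1%:R * r)%:E)%E.
Proof.
move=> p1 r0 c_le.
case: p p1 => [q||] //=; last first.
  move=> _; apply: (@le_trans _ _ r%:E).
    elim: c c_le => [|t c IH] c_le; first by rewrite big_nil lee_fin.
    rewrite big_cons ge_max (c_le t (mem_head _ _)).2 /=.
    by apply: IH => u uc; apply: c_le; rewrite in_cons uc orbT.
  by rewrite lee_fin ler_peMl // ler1n.
rewrite lee_fin => q1; have q0 : 0 < q := lt_le_trans ltr01 q1.
rewrite sum_poweR_fine => [|t /c_le[t0 tr]]; last first.
  by split=> //; apply/negP => /eqP ty; move: tr; rewrite ty.
rewrite poweR_EFin lee_fin.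
have fine_le t : t \in [seq fine u | u <- c] -> 0 <= t <= r.
  by case/mapP=> -[x||] /c_le[] //=; rewrite !lee_fin => x0 xr ->; rewrite x0 xr.
have := sum_powR_le (ltW q0) fine_le; rewrite big_map size_map => sum_le.
have qV0 : 0 <= q^-1 by rewrite invr_ge0 ltW.
apply: (le_trans (ge0_ler_powR qV0 _ _ sum_le)); rewrite ?nnegrE.
- by apply: sumr_ge0 => t _; apply: powR_ge0.
- by apply: mulr_ge0; [apply: ler0n|apply: powR_ge0].
rewrite powRM ?powR_ge0 ?ler0n // -powRrM mulfV ?gt_eqF // powRr1 // ler_wpM2r //.
have [->|c0] := eqVneq (size c) 0%N; first by rewrite powR0 ?gt_eqF ?invr_gt0.
apply: (le_trans (ler1_powR _ _)); rewrite ?ler1n ?lt0n ?invf_le1 //.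
by rewrite ler_nat.
Qed.

End LpNorm.

Section FormalSums.
Context {R : realType} {X : Type} (A : set X) (d : X -> X -> \bar R) (p : \bar R).
Hypotheses (md : is_metric d) (p1 : (1 <= p)%E).

Lemma eq_fsum n (x y : 'I_n -> X) (xA : forall i, ~ A (x i)) (yA : forall i, ~ A (y i)) :
  x =1 y -> FSum xA = FSum yA.
Proof. by move=> /funext xy; subst y; rewrite (Prop_irrelevance xA yA). Qed.

Definition diag_matching (a b : fsum A) (e : fs_n a = fs_n b) :
  matching A (fs_n a) (fs_n b).
Proof.
refine (@Matching X A _ _ (fun i => Some (cast_ord e i)) _
  (@fs_pt X A a) _ (@fs_pt X A b) _).
- by move=> i i' j [<-] [ii']; apply: val_inj.
- by [].
- by move=> j /forallP /(_ (cast_ord (esym e) j)); rewrite cast_ordKV eqxx.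
Defined.

Lemma Wp_le_pointwise (a b : fsum A) (e : fs_n a = fs_n b) (r : R) : 0 <= r ->
  (forall i : 'I_(fs_n a), (d (fs_pt i) (fs_pt (cast_ord e i)) <= r%:E)%E) ->
  (Wp A d p a b <= ((fs_n a).+1%:R * r)%:E)%E.
Proof.
move=> r0 ab_le; have [d0 _ _ _] := md.
apply: (@le_trans _ _ (pcost d p (diag_matching e))).
  by apply: ereal_inf_lbound; exists (diag_matching e).
have no_unmatched j : ~~ unmatched (m_phi (diag_matching e)) j.
  by apply/forallPn; exists (cast_ord (esym e) j); rewrite /= cast_ordKV eqxx.
rewrite /pcost /match_dists (eq_filter (a2 := pred0)) => [|j]; last first.
  exact/negbTE/no_unmatched.
rewrite filter_pred0 cats0; set c := map _ _.
have -> : fs_n a = size c by rewrite size_map size_enum_ord.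
apply: lp_norm_le => // t /mapP[i _ ->] /=; exact: conj (d0 _ _) (ab_le i).
Qed.

Definition sums_in (S : set X) (k : nat) : set (fsum A) :=
  [set b | fs_n b = k /\ forall i : 'I_(fs_n b), S (fs_pt i)].

Section Parametrisation.
Variables (x0 : X) (x0A : ~ A x0).

(* Replacing points of A by x0 makes [fsum_of] total; on [spow S k], with S
   disjoint from A, it does nothing. *)
Definition clip (y : X) : X := if pselect (A y) then x0 else y.

Lemma clip_notin y : ~ A (clip y).
Proof. by rewrite /clip; case: pselect. Qed.

Lemma clip_id y : ~ A y -> clip y = y.
Proof. by rewrite /clip; case: pselect. Qed.

Definition fsum_of (k : nat) (x : nat -> X) : fsum A :=
  @FSum X A k (fun i => clip (x i)) (fun i => clip_notin (y := x i)).

Lemma sums_in_image (S : set X) k :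
  S `<=` ~` A -> sums_in S k = fsum_of k @` spow S k.
Proof.
move=> SA; apply/seteqP; split=> [[n pt off] [/= nk Sb]|_ [x Sx <-]]; last first.
  by split=> // i; rewrite /= clip_id; [|apply: SA]; apply: Sx.
subst n; pose x i := if insub i is Some o then pt o else x0.
have xE (i : 'I_k) : x i = pt i by rewrite /x valK.
exists x => [i i_lt|]; first by have /= -> := xE (Ordinal i_lt); apply: Sb.
by apply: eq_fsum => i; rewrite xE clip_id.
Qed.

Lemma fsum_of_continuous (S : set X) k :
  S `<=` ~` A -> dcontinuous_on (dpow d k) (Wp A d p) (spow S k) (fsum_of k).
Proof.
move=> SA x Sx e e0; have r0 : 0 < e / k.+2%:R by rewrite divr_gt0.
exists (e / k.+2%:R) => // y Sy /(dpow_lt d k x y r0) xy.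
pose e_k : fs_n (fsum_of k x) = fs_n (fsum_of k y) := erefl.
apply: le_lt_trans (Wp_le_pointwise (e := e_k) (ltW r0) _) _.
  move=> i; rewrite cast_ord_id /= !clip_id; first exact/ltW/xy.
  - exact/SA/Sy.
  - exact/SA/Sx.
by rewrite lte_fin mulrCA gtr_pMr // ltr_pdivrMr // mul1r ltr_nat.
Qed.

End Parametrisation.

Lemma dcompact_sums_in (S : set X) k :
  dcompact d S -> S `<=` ~` A -> dcompact (Wp A d p) (sums_in S k).
Proof.
move=> cS SA.
have [k0|k_gt0] := posnP k.
  apply: dcompact_dist0 => a b [ea _] [eb _].
  have e : fs_n a = fs_n b by rewrite ea eb.
  apply: le_trans (Wp_le_pointwise (e := e) (lexx (0 : R)) _) _ => [i|].
    by have := ltn_ord i; rewrite {2}ea k0.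
  by rewrite mulr0.
(* for k > 0 a point outside A, as needed by [clip], is read off any element *)
have [[b0 [eb0 _]]|no_sum] := pselect (exists b, sums_in S k b); last first.
  by apply: dcompact_dist0 => a b Sa; case: no_sum; exists a.
have b0_gt0 : (0 < fs_n b0)%N by rewrite eb0.
have x0A := @fs_off _ _ b0 (Ordinal b0_gt0).
rewrite (sums_in_image x0A k SA).
apply: (dcompact_image (dpow_metric k md) (dcompact_spow md cS)).
exact: fsum_of_continuous.
Qed.

End FormalSums.

Lemma sigma_compact_countable {R : realType} {X : Type} (T : countType)
    (d : X -> X -> \bar R) (C : T -> set X) :
  (forall t, dcompact d (C t)) -> (forall x, exists t, C t x) -> sigma_compact d.
Proof.
move=> cC covC.
exists (fun n => if unpickle n is Some t then C t else set0); split.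
  by move=> n; case: unpickle => [t|]; [exact: cC|exact: dcompact_dist0].
by move=> x; have [t Ctx] := covC x; exists (pickle t); rewrite pickleK.
Qed.

Section MetricPair.
Context {R : realType} {X : Type} (d : X -> X -> \bar R) (A : set X).
Hypothesis md : is_metric d.

Definition far_from (r : R) : set X := [set x | forall z, A z -> (r%:E <= d x z)%E].

Lemma far_from_closed r : dclosed d (far_from r).
Proof.
case: (md) => _ _ dC _ x /existsNP[z /not_implyP[Az /negP]].
rewrite -ltNge dC => /(ball_open md)[e e0 near_x].
exists e; split=> // y /near_x zy /(_ z Az).
by rewrite dC leNgt zy.
Qed.

Lemma far_from_notin r : 0 < r -> far_from r `<=` ~` A.
Proof.
case: md => _ dxx _ _ r0 x far_x Ax.
by have := far_x x Ax; rewrite dxx lee_fin leNgt r0.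
Qed.

Lemma far_from_le r r' : r' <= r -> far_from r `<=` far_from r'.
Proof. by move=> r'r x far_x z /far_x; apply: le_trans; rewrite lee_fin. Qed.

Lemma notin_far_from x : dclosed d A -> ~ A x -> exists m : nat, far_from m.+1%:R^-1 x.
Proof.
move=> cA /cA[r [r0 near_x]]; exists (Num.Def.archi_bound r^-1) => z Az.
have /negP : ~ (d x z < r%:E)%E by move/near_x.
rewrite -leNgt; apply: le_trans; rewrite lee_fin -[leRHS]invrK.
rewrite lef_pV2 ?posrE ?invr_gt0 // ltW //.
apply: lt_le_trans (archi_boundP _) _; first by rewrite invr_ge0 ltW.
by rewrite ler_nat.
Qed.

Definition far_exhaustion (K : nat -> set X) (N m : nat) : set X :=
  (\big[setU/set0]_(n < N.+1) K n) `&` far_from m.+1%:R^-1.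

Lemma dcompact_far_exhaustion (K : nat -> set X) N m :
  (forall n, dcompact d (K n)) -> dcompact d (far_exhaustion K N m).
Proof.
move=> cK; apply: dcompactI_closed; last exact: far_from_closed.
by elim/big_ind: _ => //; [exact: dcompact_dist0|exact: dcompactU].
Qed.

Lemma fsum_in_far_exhaustion (K : nat -> set X) :
  dclosed d A -> (forall x, exists n, K n x) ->
  forall b : fsum A, exists N m, forall i : 'I_(fs_n b), far_exhaustion K N m (fs_pt i).
Proof.
move=> cA covK b.
have /choice[f fP] (i : 'I_(fs_n b)) :
    exists nm : nat * nat, K nm.1 (fs_pt i) /\ far_from nm.2.+1%:R^-1 (fs_pt i).
  have [n Kn] := covK (fs_pt i); have [m far_m] := notin_far_from cA (@fs_off _ _ b i).
  by exists (n, m).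
exists (\max_i (f i).1)%N, (\max_i (f i).2)%N => i; split.
  rewrite -bigcup_mkord; exists (f i).1; last exact: (fP i).1.
  by rewrite /= ltnS (leq_bigmax (F := fun j => (f j).1)).
apply: far_from_le (fP i).2.
by rewrite lef_pV2 ?posrE // ler_nat ltnS (leq_bigmax (F := fun j => (f j).2)).
Qed.

End MetricPair.

Theorem proposition7p16 (R : realType) (X : Type) (d : X -> X -> \bar R)
  (A : set X) (p : \bar R) :
  is_metric d -> dclosed d A -> sigma_compact d ->
  (1 <= p)%E ->
  sigma_compact (Wp A d p).
Proof.
move=> md cA [K [cK covK]] p1.
pose C (t : nat * nat * nat) : set (fsum A) :=
  sums_in (far_exhaustion d A K t.1.2 t.2) t.1.1.
apply: (@sigma_compact_countable _ _ _ _ C) => [[[k N] m]|b].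
  apply: (dcompact_sums_in md p1 (dcompact_far_exhaustion md cK)).
  by move=> x [_ far_x]; apply: far_from_notin far_x.
have [N [m b_in]] := fsum_in_far_exhaustion cA covK b.
by exists (fs_n b, N, m).
Qed.
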